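(* Let $S$ be a standard tableau of type $(i_1,\dots,i_m)$ and $D(S)$ its dependence graph. (a) If $B$ is a black arc of $D(S)$ with $b(B)>1$, then there is a black arc sequence from $s(B)+1$ to $t(B)-1$. (b) Let $B$ be a green arc of $D(S)$ with $b(B)>1$. If there is no green arc other than $B$ nested inside $B$, then there is a black arc sequence from $0$ to $t(B)-1$. If there is a green arc other than $B$ nested inside $B$, then there is a black arc sequence from the rightmost endpoint of the green arcs (other than $B$) nested inside $B$ to $t(B)-1$.
   Context: Setting: $n\ge2k\ge0$, $0<i_1<\dots<i_m=n$. A standard tableau of type $(i_1,\dots,i_m)$ is a two-row Young diagram (top row $n-k$ boxes, bottom $k$) in which $i_l$ occurs exactly $i_l-i_{l-1}$ times ($i_0=0$), entries strictly decreasing along rows and each column's top entry $\ge$ its bottom entry. Double entries are $i_l$ with $i_l-i_{l-1}=2$ (in both rows). Weight sequence $a_1\dots a_n$: $a_{i-1}=a_i=\times$ if $i$ is a double entry, otherwise $a_i=\wedge$ if $i$ is in the top row and $a_i=\vee$ if in the bottom row. Extended cup diagram $eC(S)$: prepend $n-2k$ points labelled $\vee$ at positions $-(n-2k)+1,\dots,0$ to the weight sequence (positions $1,\dots,n$), and repeatedly join by a cup any $\vee\wedge$ pair (in this order) that is adjacent after ignoring $\times$'s and already joined points; cups starting at an added point are green, the others black. Dependence graph $D(S)$: nodes numbered $-(n-2k),\dots,0$ and $i_1,\dots,i_m$. For each double entry $i_s$ there is a black arc from $i_s-2$ to $i_s$ labelled $N^{-1}$; for each cup of $eC(S)$ joining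 $i<j$ there is an arc of the same colour from $i-1$ to $j$, labelled $N^{-l}$ if black and $e_l$ if green, $l=\frac12(j-i+1)$. For an arc $B$, $s(B)$ and $t(B)$ are the numbers of its left and right endpoint nodes and $b(B)=\frac12(t(B)-s(B))$. An arc $B'$ is nested inside $B$ if $s(B)\le s(B')<t(B')\le t(B)$. An arc sequence from $a$ to $b$ is a sequence of arcs $B_1,\dots,B_r$ with $s(B_1)=a$, $t(B_r)=b$, $t(B_i)=s(B_{i+1})$; it is black if all $B_i$ are black. *)

From HB Require Import structures.
From mathcomp Require Import all_boot all_order all_algebra.
Set Implicit Arguments. Unset Strict Implicit. Unset Printing Implicit Defensive.
Import Order.TTheory GRing.Theory Num.Theory.

Inductive wsym := WUp | WDown | WCross.
Definition wsym_eqb (a b : wsym) : bool :=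
  match a, b with
  | WUp, WUp | WDown, WDown | WCross, WCross => true
  | _, _ => false
  end.
Lemma wsym_eqP : Equality.axiom wsym_eqb.
Proof. by case; case; constructor. Qed.
HB.instance Definition _ := hasDecEq.Build wsym wsym_eqP.

Definition is_type (n : nat) (ityp : seq nat) : bool :=
  [&& ityp != [::], 0 < head 0 ityp, sorted ltn ityp & last 0 ityp == n].

(* entry number l (0-based) of the type is nth 0 ityp l = i_{l+1};
   its multiplicity i_{l+1} - i_l (with i_0 = 0). *)
Definition mult (ityp : seq nat) (l : nat) : nat :=
  nth 0 ityp l - nth 0 (0 :: ityp) l.

(* A two-row Young diagram filling: top row (left to right) and bottom row
   (left to right); columns are left justified, column j has top entry
   nth 0 top j and (for j < k) bottom entry nth 0 bot j. *)
Record tableau := Tableau { top : seq nat; bot : seq nat }.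

Definition is_standard (n k : nat) (ityp : seq nat) (T : tableau) : bool :=
  [&& size (top T) == n - k, size (bot T) == k,
      all (fun x => x \in ityp) (top T ++ bot T),
      all (fun l => count_mem (nth 0 ityp l) (top T ++ bot T) == mult ityp l)
          (iota 0 (size ityp)),
      sorted gtn (top T), sorted gtn (bot T) &
      all (fun j => nth 0 (bot T) j <= nth 0 (top T) j) (iota 0 k)].

Definition is_double (ityp : seq nat) (d : nat) : bool :=
  has (fun l => (nth 0 ityp l == d) && (mult ityp l == 2)) (iota 0 (size ityp)).

Definition weight (ityp : seq nat) (T : tableau) (p : nat) : wsym :=
  if is_double ityp p || is_double ityp p.+1 then WCross
  else if p \in top T then WUp else WDown.

(* extended weight: positions -(n-2k)+1 .. 0 carry \/, positions 1..n the
   weight sequence *)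
Definition ext_sym (ityp : seq nat) (T : tableau) (p : int) : wsym :=
  if (p <= 0)%R then WDown else weight ityp T (absz p).

Definition ext_pos (n k : nat) : seq int :=
  [seq (Posz q - Posz (n - 2 * k) + 1)%R | q <- iota 0 (n - 2 * k + n)].

(* Cup diagram: repeatedly join a \/ /\ pair which is adjacent after
   ignoring x's and already joined points (here: always the leftmost such
   pair; the result does not depend on the order). *)
Section Cups.
Variables (ps : seq int) (sym : int -> wsym).

Definition used (cs : seq (int * int)) (p : int) : bool :=
  has (fun c => (c.1 == p) || (c.2 == p)) cs.
Definition freep cs p : bool := (sym p != WCross) && ~~ used cs p.
Definition next_free cs (p : int) : option int :=
  ohead [seq q <- ps | (p < q)%R && freep cs q].
Definition joinable cs p : bool :=
  [&& freep cs p, sym p == WDown &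
      if next_free cs p is Some q then sym q == WUp else false].
Definition cup_step cs : option (int * int) :=
  match [seq p <- ps | joinable cs p] with
  | p :: _ => if next_free cs p is Some q then Some (p, q) else None
  | [::] => None
  end.
Fixpoint cups_iter (fuel : nat) cs : seq (int * int) :=
  match fuel with
  | 0 => cs
  | f.+1 => if cup_step cs is Some c then cups_iter f (c :: cs) else cs
  end.
(* each step joins two of the size ps points, so size ps steps suffice *)
Definition cups : seq (int * int) := cups_iter (size ps) [::].
End Cups.

Definition ext_cups (n k : nat) (ityp : seq nat) (T : tableau) :=
  cups (ext_pos n k) (ext_sym ityp T).

Definition arc := (int * int * bool)%type.
Definition arc_s (B : arc) : int := B.1.1.
Definition arc_t (B : arc) : int := B.1.2.
Definition arc_green (B : arc) : bool := B.2.

Definition dep_arcs (n k : nat) (ityp : seq nat) (T : tableau) : seq arc :=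
  [seq ((Posz d - 2)%R, Posz d, false) | d <- ityp & is_double ityp d] ++
  [seq ((c.1 - 1)%R, c.2, (c.1 <= 0)%R) | c <- ext_cups n k ityp T].

Definition nested (B' B : arc) : bool :=
  [&& (arc_s B <= arc_s B')%R, (arc_s B' < arc_t B')%R & (arc_t B' <= arc_t B)%R].

Fixpoint black_arc_seq (A : seq arc) (a b : int) (l : seq arc) : Prop :=
  match l with
  | [::] => a = b
  | B :: l' => [/\ B \in A, ~~ arc_green B, arc_s B = a &
                   black_arc_seq A (arc_t B) b l']
  end.

From Pilot Require Import Defs.
From HB Require Import structures.
From mathcomp Require Import all_boot all_order all_algebra zify.
Import Order.TTheory GRing.Theory Num.Theory.
Set Implicit Arguments. Unset Strict Implicit. Unset Printing Implicit Defensive.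
Local Open Scope ring_scope.

(* The cups of eC(S) form a non-crossing matching of the non-x points which is
   saturated: every non-x point strictly under a cup is the end of a cup nested in it.
   Call (a, b] tiled when each of its points lies on a cup, or on the x x pair
   (e - 1, e) of a double entry e, contained in (a, b].  The leftmost tile of a tiled
   interval is a cup (a + 1, y) or a pair ending at a + 2, i.e. a black arc of D(S)
   out of a as long as a >= 0, and what remains is tiled again; so a tiled interval
   with a >= 0 carries a black arc sequence.  In (a) the interior of the cup of B is
   tiled.  In (b) the points <= 0 are down-weights, so each of them under the cup of
   B lies on a nested green cup: either the cup of B starts at 0, or the part of its
   interior to the right of the last nested green cup is tiled and starts at a
   point >= 0. *)

Lemma ohead_filter_sorted d (T : porderType d) (s : seq T) (P : pred T) q :
  sorted <%O s -> ohead [seq x <- s | P x] = Some q ->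
  [/\ q \in s, P q & forall r, r \in s -> P r -> (q <= r)%O].
Proof.
elim: s => [|x s IH] //= Hs.
have Hs' := path_sorted Hs.
have x_min := order_path_min lt_trans Hs.
case Px: (P x) => /=.
  case=> <-; split; rewrite ?mem_head // => r; rewrite in_cons.
  by case/predU1P=> [-> //|rs _]; apply/ltW; move/allP: x_min; apply.
case/(IH Hs')=> qs Pq q_min; split; rewrite ?in_cons ?qs ?orbT //.
by move=> r /predU1P [->|]; [rewrite Px | exact: q_min].
Qed.

Lemma usedP cs (r : int) :
  reflect (exists2 c, c \in cs & c.1 = r \/ c.2 = r) (used cs r).
Proof.
apply: (iffP hasP) => [[c cs_c /orP [] /eqP]|[c cs_c [] <-]];
  by [exists c; [|left]|exists c; [|right]|exists c; rewrite // eqxx ?orbT].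
Qed.

Section CupDiagram.
Variables (ps : seq int) (sym : int -> wsym).

Record cup_diagram (cs : seq (int * int)) : Prop := CupDiagram {
  cup_lt : forall c : int * int, c \in cs -> c.1 < c.2;
  cup_down : forall c : int * int, c \in cs -> sym c.1 = WDown;
  cup_up : forall c : int * int, c \in cs -> sym c.2 = WUp;
  cup_mem1 : forall c : int * int, c \in cs -> c.1 \in ps;
  cup_mem2 : forall c : int * int, c \in cs -> c.2 \in ps;
  cup_disjoint : forall c c' : int * int, c \in cs -> c' \in cs -> c != c' ->
    [/\ c.1 != c'.1, c.1 != c'.2, c.2 != c'.1 & c.2 != c'.2];
  cup_noncrossing : forall c c' : int * int, c \in cs -> c' \in cs ->
    c.1 < c'.1 -> c'.1 < c.2 -> c.2 < c'.2 -> False;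
  cup_full : forall (c : int * int) r, c \in cs -> r \in ps ->
    c.1 < r -> r < c.2 -> sym r != WCross -> used cs r }.

Hypothesis ps_sorted : sorted <%R ps.

Lemma cup_step_diagram cs c :
  cup_diagram cs -> cup_step ps sym cs = Some c -> cup_diagram (c :: cs).
Proof.
case=> lt_cs down_cs up_cs mem1_cs mem2_cs disj_cs ncross_cs full_cs.
rewrite /cup_step; case E: [seq p <- ps | joinable ps sym cs p] => [|p rest] //.
have /andP [jp ps_p] : joinable ps sym cs p && (p \in ps).
  by rewrite -mem_filter E mem_head.
case Eq: (next_free ps sym cs p) => [q|] //; case=> <-.
move: jp; rewrite /joinable Eq /freep => /and3P [/andP [Xp Up] /eqP Sp /eqP Sq].
have [ps_q /andP [pq /andP [Xq Uq]] q_min] := ohead_filter_sorted ps_sorted Eq.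
have fresh c' : c' \in cs -> [/\ c'.1 != p, c'.2 != p, c'.1 != q & c'.2 != q].
  by move=> cs_c'; split; apply/eqP=> e;
    [move/usedP: Up|move/usedP: Up|move/usedP: Uq|move/usedP: Uq];
    apply; exists c'; rewrite // e; by [left|right].
split.
- by move=> c' /predU1P [-> //|/lt_cs].
- by move=> c' /predU1P [-> //|/down_cs].
- by move=> c' /predU1P [-> //|/up_cs].
- by move=> c' /predU1P [-> //|/mem1_cs].
- by move=> c' /predU1P [-> //|/mem2_cs].
- move=> c1 c2 /predU1P [->|cs1] /predU1P [->|cs2]; rewrite ?eqxx //= => ne12.
  + by have [*] := fresh c2 cs2; split; rewrite eq_sym.
  + by have [*] := fresh c1 cs1.
  + exact: disj_cs ne12.
- move=> c1 c2 /predU1P [->|cs1] /predU1P [->|cs2] //=.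
  + by move=> *; lia.
  + move=> _ h1 h2; have := full_cs c2 q cs2 ps_q h1 h2 Xq; exact/negP.
  + move=> h1 h2 _; have := full_cs c1 p cs1 ps_p h1 h2 Xp; exact/negP.
  + exact: ncross_cs.
- move=> c' r /predU1P [-> /=|cs_c'] ps_r h1 h2 Xr; rewrite /used /=; apply/orP; right.
    (* q is the nearest free point right of p, so the points between are used *)
    apply/negPn/negP=> Ur.
    by have := q_min r ps_r; rewrite h1 /freep Xr Ur => /(_ isT); lia.
  exact: full_cs h1 h2 Xr.
Qed.

Lemma cups_diagram : cup_diagram (cups ps sym).
Proof.
rewrite /cups; have : cup_diagram [::] by split.
elim: (size ps) [::] => [|f IH] cs //= Hcs.
by case E: (cup_step ps sym cs) => [c|] //; apply/IH/(cup_step_diagram Hcs).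
Qed.

End CupDiagram.

Record dependence_graph (ps : seq int) (sym : int -> wsym) (dbl : pred int)
    (cs : seq (int * int)) (A : seq Defs.arc) : Prop := DependenceGraph {
  dg_cups : cup_diagram ps sym cs;
  dg_interval : forall x y r : int,
    x \in ps -> y \in ps -> x <= r -> r <= y -> r \in ps;
  dg_nonpos : forall r : int, r <= 0 -> sym r = WDown;
  dg_crossP : forall r : int, sym r = WCross -> exists2 e, dbl e & r = e - 1 \/ r = e;
  dg_double_cross : forall e : int, dbl e -> sym (e - 1) = WCross /\ sym e = WCross;
  dg_double_nonadjacent : forall e : int, dbl e -> ~~ dbl (e + 1);
  dg_double_arc : forall e : int, dbl e -> (e - 2, e, false) \in A;
  dg_cup_arc : forall c : int * int, c \in cs -> (c.1 - 1, c.2, c.1 <= 0) \in A;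
  dg_arcP : forall B : Defs.arc, B \in A ->
    (exists e, B = (e - 2, e, false)) \/
    exists2 c : int * int, c \in cs & B = (c.1 - 1, c.2, c.1 <= 0) }.

Section BlackArcSequences.
Variables (ps : seq int) (sym : int -> wsym) (dbl : pred int).
Variables (cs : seq (int * int)) (A : seq Defs.arc).
Hypothesis DG : dependence_graph ps sym dbl cs A.

Let cs_diagram := dg_cups DG.
Let ps_interval := dg_interval DG.
Let sym_nonpos := dg_nonpos DG.
Let sym_crossP := dg_crossP DG.
Let sym_double := dg_double_cross DG.
Let double_nonadjacent := dg_double_nonadjacent DG.
Let double_arc := dg_double_arc DG.
Let cup_arc := dg_cup_arc DG.
Let arcP := dg_arcP DG.
Let cup_lt := cup_lt cs_diagram.
Let cup_noncrossing := cup_noncrossing cs_diagram.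

Lemma cup_nested (x y : int) (c : int * int) (r : int) :
  (x, y) \in cs -> c \in cs -> c.1 = r \/ c.2 = r -> x < r -> r < y ->
  x < c.1 /\ c.2 < y.
Proof.
move=> cs_xy cs_c hr h1 h2; have /= lxy := cup_lt cs_xy; have lc := cup_lt cs_c.
have [e|ne] := eqVneq c (x, y); first by case: hr; rewrite e /=; lia.
have [d1 d2 d3 d4] := cup_disjoint cs_diagram cs_c cs_xy ne; rewrite /= in d1 d2 d3 d4.
have /= cr_xy := cup_noncrossing cs_xy cs_c.
have /= cr_c := cup_noncrossing cs_c cs_xy.
case: hr => e; subst r; split=> //.
- have [//|yc] : c.2 < y \/ y < c.2 by lia.
  by case: (cr_xy h1 h2 yc).
- have [//|cx] : x < c.1 \/ c.1 < x by lia.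
  by case: (cr_c cx h1); lia.
Qed.

Definition tiled (a b : int) : Prop :=
  forall r : int, a < r -> r <= b ->
    (sym r = WCross ->
       exists2 e, dbl e & [/\ r = e - 1 \/ r = e, a < e - 1 & e <= b]) /\
    (sym r <> WCross ->
       exists2 c : int * int, c \in cs & [/\ c.1 = r \/ c.2 = r, a < c.1 & c.2 <= b]).

Lemma tiled_after_cup (a b x y : int) :
  tiled a b -> (x, y) \in cs -> x = a + 1 -> tiled y b.
Proof.
move=> tab cs_xy xa r yr rb; have /= lxy := cup_lt cs_xy.
have [tab_x tab_nx] := tab r ltac:(lia) rb; split=> [Sr|nSr].
  have [e de [re ae eb]] := tab_x Sr; exists e => //; split=> //.
  have [ey|//] : e - 1 = y \/ y < e - 1 by lia.
  by have [+ _] := sym_double de; rewrite ey (cup_up cs_diagram cs_xy).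
have [c cs_c [rc ac cb]] := tab_nx nSr; exists c => //; split=> //.
have lc := cup_lt cs_c.
have [e|ne] := eqVneq c (x, y); first by case: rc; rewrite e /=; lia.
have [d1 d2 _ _] := cup_disjoint cs_diagram cs_c cs_xy ne; rewrite /= in d1 d2.
have [cy|//] : c.1 < y \/ y < c.1 by lia.
by case: (cup_noncrossing cs_xy cs_c) => /=; case: rc; lia.
Qed.

Lemma tiled_after_double (a b : int) : tiled a b -> dbl (a + 2) -> tiled (a + 2) b.
Proof.
move=> tab da2 r ar rb; have [tab_x tab_nx] := tab r ltac:(lia) rb.
have [Sa1 Sa2] := sym_double da2; split=> [Sr|nSr].
  have [e de [re ae eb]] := tab_x Sr; exists e => //; split=> //.
  have [ea|//] : a + 2 + 1 = e \/ a + 2 < e - 1 by lia.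
  by move: (double_nonadjacent da2); rewrite ea de.
have [c cs_c [rc ac cb]] := tab_nx nSr; exists c => //; split=> //.
have [c1|[c1|//]] : c.1 = a + 2 - 1 \/ c.1 = a + 2 \/ a + 2 < c.1 by lia.
- by move: (cup_down cs_diagram cs_c); rewrite c1 Sa1.
- by move: (cup_down cs_diagram cs_c); rewrite c1 Sa2.
Qed.

Lemma tiled_black_seq (a b : int) :
  0 <= a -> a <= b -> tiled a b -> exists l, black_arc_seq A a b l.
Proof.
have [N] := ubnP (absz (b - a)); elim: N a => // N IH a ltN a0 ab tab.
have [<-|neab] := eqVneq a b; first by exists [::].
have [tab_x tab_nx] := tab (a + 1) ltac:(lia) ltac:(lia).
have [Sa|nSa] := eqVneq (sym (a + 1)) WCross.
  have [e de [ae ae1 eb]] := tab_x Sa; have ea : e = a + 2 by lia.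
  rewrite ea in de eb.
  have [l sl] := IH (a + 2) ltac:(lia) ltac:(lia) eb (tiled_after_double tab de).
  exists ((a, a + 2, false) :: l); split=> //.
  by have := double_arc de; rewrite addrK.
have [[x y] cs_xy [/= ax ax1 yb]] := tab_nx (elimN eqP nSa).
have /= lxy := cup_lt cs_xy.
have xa : x = a + 1 by lia.
have [l sl] := IH y ltac:(lia) ltac:(lia) yb (tiled_after_cup tab cs_xy xa).
exists ((a, y, false) :: l) => /=; split=> //.
by have := cup_arc cs_xy; rewrite /= xa addrK; have -> : (a + 1 <= 0) = false by lia.
Qed.

Lemma cup_tiled_from (x y a : int) :
  (x, y) \in cs -> x <= a -> a < y -> sym a <> WCross ->
  (forall c : int * int, c \in cs -> x < c.1 -> c.2 < y -> a < c.2 -> a < c.1) ->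
  tiled a (y - 1).
Proof.
move=> cs_xy xa ay nSa after_a r ar ry; have /= lxy := cup_lt cs_xy.
split=> [Sr|nSr].
  have [e de re] := sym_crossP Sr; have [Se1 Se] := sym_double de.
  exists e => //; split=> //.
  - have [ea|//] : e - 1 = a \/ a < e - 1 by lia.
    by rewrite -ea Se1 in nSa.
  - have [ey|//] : e = y \/ e <= y - 1 by lia.
    by move: (cup_up cs_diagram cs_xy); rewrite /= -ey Se.
have ps_r : r \in ps.
  apply: (ps_interval (cup_mem1 cs_diagram cs_xy) (cup_mem2 cs_diagram cs_xy));
  by rewrite /=; lia.
have /usedP [c cs_c rc] :=
  cup_full cs_diagram cs_xy ps_r ltac:(rewrite /=; lia) ltac:(rewrite /=; lia)
    (introN eqP nSr).
have lc := cup_lt cs_c.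
have [xc cy] := cup_nested cs_xy cs_c rc ltac:(lia) ltac:(lia).
exists c => //; split=> //; last by lia.
by apply: after_a => //; case: rc; lia.
Qed.

Lemma cup_interior_tiled (x y : int) : (x, y) \in cs -> tiled x (y - 1).
Proof.
move=> cs_xy; have /= lxy := cup_lt cs_xy; have /= Sx := cup_down cs_diagram cs_xy.
by apply: (cup_tiled_from cs_xy); rewrite ?Sx.
Qed.

Lemma nonpos_point_nested_cup (x y r : int) :
  (x, y) \in cs -> x < r -> r < y -> r <= 0 ->
  exists2 c : int * int, c \in cs & [/\ c.1 = r \/ c.2 = r, x < c.1, c.2 < y & c.1 <= 0].
Proof.
move=> cs_xy xr ry r0; have /= lxy := cup_lt cs_xy.
have ps_r : r \in ps.
  apply: (ps_interval (cup_mem1 cs_diagram cs_xy) (cup_mem2 cs_diagram cs_xy));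
  by rewrite /=; lia.
have nSr : sym r != WCross by rewrite sym_nonpos.
have /usedP [c cs_c rc] := cup_full cs_diagram cs_xy ps_r xr ry nSr.
have [xc cy] := cup_nested cs_xy cs_c rc xr ry.
have lc := cup_lt cs_c.
by exists c => //; split=> //; case: rc; lia.
Qed.

Definition nested_greens (B : Defs.arc) : seq Defs.arc :=
  [seq B' <- A | arc_green B' && (B' != B) && nested B' B].

Lemma green_cup_nested_greens (x y : int) (c : int * int) : c \in cs ->
  x < c.1 -> c.2 < y -> c.1 <= 0 ->
  (c.1 - 1, c.2, true) \in nested_greens (x - 1, y, true).
Proof.
move=> cs_c xx yy x0; have /= lc := cup_lt cs_c.
rewrite mem_filter /nested /arc_green /arc_s /arc_t /=.
have := cup_arc cs_c; rewrite /= x0 => -> /=; rewrite andbT.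
apply/andP; split; first by apply/eqP; case; lia.
by apply/and3P; split; lia.
Qed.

Lemma black_arc_interior_seq (B : Defs.arc) : B \in A -> ~~ arc_green B ->
  2 < arc_t B - arc_s B -> exists l, black_arc_seq A (arc_s B + 1) (arc_t B - 1) l.
Proof.
case/arcP=> [[e ->]|[[x y] cs_xy ->]]; rewrite /arc_green /arc_s /arc_t /=; first lia.
move=> x_pos _; have /= lxy := cup_lt cs_xy; rewrite subrK.
by apply: tiled_black_seq; [lia | lia | exact: cup_interior_tiled].
Qed.

Lemma green_arc_seq_from_zero (B : Defs.arc) : B \in A -> arc_green B ->
  2 < arc_t B - arc_s B -> nested_greens B = [::] ->
  exists l, black_arc_seq A 0 (arc_t B - 1) l.
Proof.
case/arcP=> [[e ->] //|[[x y] cs_xy ->]]; rewrite /arc_green /arc_s /arc_t /= => x0.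
rewrite x0 => xy G0; have /= lxy := cup_lt cs_xy.
have x_eq0 : x = 0.
  have [//|xneg] : x = 0 \/ x < 0 by lia.
  have [c cs_c [_ xc cy c0]] :=
    nonpos_point_nested_cup (r := x + 1) cs_xy ltac:(lia) ltac:(lia) ltac:(lia).
  by have := green_cup_nested_greens cs_c xc cy c0; rewrite G0.
by rewrite -x_eq0; apply: tiled_black_seq; [lia | lia | exact: cup_interior_tiled].
Qed.

Lemma last_green_cup_tiled (x y x' y' : int) : (x, y) \in cs -> (x', y') \in cs ->
  x < x' -> y' < y -> x' <= 0 ->
  (forall c : int * int, c \in cs -> x < c.1 -> c.2 < y -> c.1 <= 0 -> c.2 <= y') ->
  tiled y' (y - 1).
Proof.
move=> cs_xy cs_xy' xx yy x'0 last_green; have /= lxy' := cup_lt cs_xy'.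
apply: (cup_tiled_from cs_xy); [lia | lia | by rewrite (cup_up cs_diagram cs_xy') |].
move=> c cs_c xc cy yc; have lc := cup_lt cs_c.
have [c0|cpos] : c.1 <= 0 \/ 0 < c.1 by lia.
  by have := last_green c cs_c xc cy c0; lia.
have [e|nec] := eqVneq c (x', y'); first by rewrite e /= in yc; lia.
have [_ d2 _ _] := cup_disjoint cs_diagram cs_c cs_xy' nec; rewrite /= in d2.
have [//|cy'] : y' < c.1 \/ c.1 < y' by lia.
by case: (cup_noncrossing cs_xy' cs_c) => /=; lia.
Qed.

Lemma green_arc_seq_from_last_nested (B B' : Defs.arc) : B \in A -> arc_green B ->
  B' \in nested_greens B ->
  (forall B'', B'' \in nested_greens B -> arc_t B'' <= arc_t B') ->
  exists l, black_arc_seq A (arc_t B') (arc_t B - 1) l.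
Proof.
case/arcP=> [[e ->] //|[[x y] cs_xy ->]]; rewrite /arc_green /= => x0; rewrite x0.
rewrite mem_filter andbC => /andP [/arcP [[e ->] //=|[[x' y'] cs_xy' ->]]].
rewrite /nested /arc_green /arc_s /arc_t /= => /and3P [/andP [x'0 ne'] nest1 nest2] last'.
have /= lxy := cup_lt cs_xy; have /= lxy' := cup_lt cs_xy'.
have ne : (x', y') != (x, y) by apply: contra_neq ne' => -[-> ->]; rewrite x0.
have [d1 _ _ d4] := cup_disjoint cs_diagram cs_xy' cs_xy ne; rewrite /= in d1 d4.
have xx : x < x' by lia.
have yy : y' < y by lia.
have last_green (c : int * int) : c \in cs -> x < c.1 -> c.2 < y -> c.1 <= 0 -> c.2 <= y'.
  by move=> cs_c xc cy c0; apply: (last' _ (green_cup_nested_greens cs_c xc cy c0)).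
have [->|yy1] : y' = y - 1 \/ y' < y - 1 by lia.
  by exists [::].
have y'0 : 0 <= y'.
  have [//|y'neg] : 0 <= y' \/ y' < 0 by lia.
  have [c cs_c [rc xc cy c0]] :=
    nonpos_point_nested_cup (r := y' + 1) cs_xy ltac:(lia) ltac:(lia) ltac:(lia).
  by have := last_green c cs_c xc cy c0; have := cup_lt cs_c; case: rc; lia.
apply: tiled_black_seq; [lia | lia |].
exact: last_green_cup_tiled cs_xy cs_xy' xx yy x'0 last_green.
Qed.

End BlackArcSequences.

Lemma mem_ext_pos n k (r : int) :
  (r \in ext_pos n k) = (1 - Posz (n - 2 * k)%N <= r) && (r <= Posz n).
Proof.
apply/mapP/andP => [[q]|[lo hi]]; first by rewrite mem_iota => /andP [? ?] ->; split; lia.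
by exists (absz (r + Posz (n - 2 * k)%N - 1)%R); [rewrite mem_iota; apply/andP; split|]; lia.
Qed.

Lemma ext_pos_sorted n k : sorted <%R (ext_pos n k).
Proof.
rewrite /ext_pos sorted_map; apply: sub_sorted (iota_ltn_sorted 0 _) => a b /=; lia.
Qed.

Lemma ext_pos_interval n k (x y r : int) : x \in ext_pos n k -> y \in ext_pos n k ->
  x <= r -> r <= y -> r \in ext_pos n k.
Proof. by rewrite !mem_ext_pos => /andP [? ?] /andP [? ?] ? ?; apply/andP; split; lia. Qed.

Definition is_doublez (ityp : seq nat) (x : int) : bool :=
  if x is Posz d then is_double ityp d else false.

Lemma is_double_ge2 ityp d : is_double ityp d -> (2 <= d)%N.
Proof. by case/hasP=> l _ /andP [/eqP <- /eqP]; rewrite /mult; lia. Qed.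

Lemma is_double_mem ityp d : is_double ityp d -> d \in ityp.
Proof.
case/hasP=> l; rewrite mem_iota add0n => /andP [_ ls] /andP [/eqP <- _].
exact: mem_nth.
Qed.

Lemma is_double_nonadjacent n ityp d :
  is_type n ityp -> is_double ityp d -> ~~ is_double ityp d.+1.
Proof.
case/and4P=> _ _ ityp_sorted _.
have mono i j : (i < size ityp)%N -> (j < size ityp)%N -> (i <= j)%N ->
    (nth 0 ityp i <= nth 0 ityp j)%N.
  by move=> *; apply: (sorted_leq_nth leq_trans leqnn _ (sub_sorted ltnW ityp_sorted)).
case/hasP=> l; rewrite mem_iota add0n => /andP [_ ls] /andP [/eqP ld _].
apply/hasP=> -[l']; rewrite mem_iota add0n => /andP [_ ls'] /andP [/eqP ld' /eqP m2].
have ll' : (l < l')%N by rewrite ltnNge; apply/negP => /(mono _ _ ls' ls); lia.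
move: m2 ld' ls' ll'; rewrite /mult; case: l' => [//|l'] /= m2 ld' ls' ll'.
by have := mono l l' ls ltac:(lia) ltac:(lia); lia.
Qed.

Lemma is_doublez_nonadjacent n ityp (e : int) :
  is_type n ityp -> is_doublez ityp e -> ~~ is_doublez ityp (e + 1).
Proof. by case: e => [d|//]; rewrite -PoszD addn1; apply: is_double_nonadjacent. Qed.

Lemma ext_sym_nonpos ityp T (r : int) : r <= 0 -> ext_sym ityp T r = WDown.
Proof. by rewrite /ext_sym => ->. Qed.

Lemma ext_sym_crossP ityp T (r : int) : ext_sym ityp T r = WCross ->
  exists2 e, is_doublez ityp e & r = e - 1 \/ r = e.
Proof.
case: r => [[|m]|m] //; rewrite /ext_sym /weight /=.
case: ifP => [/orP [] d _|_]; last by case: ifP.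
- by exists (Posz m.+1); [|right].
- by exists (Posz m.+2); [|left; lia].
Qed.

Lemma ext_sym_double ityp T (e : int) : is_doublez ityp e ->
  ext_sym ityp T (e - 1) = WCross /\ ext_sym ityp T e = WCross.
Proof.
case: e => [d|//] /= dd; have d2 := is_double_ge2 dd.
have -> : Posz d - 1 = Posz d.-1 by lia.
rewrite /ext_sym /weight /=; have -> : (Posz d.-1 <= 0) = false by lia.
have -> : (Posz d <= 0) = false by lia.
by rewrite prednK ?dd ?orbT //; lia.
Qed.

Lemma dep_arcs_double n k ityp T (e : int) : is_doublez ityp e ->
  (e - 2, e, false) \in dep_arcs n k ityp T.
Proof.
case: e => [d|//] /= dd; rewrite mem_cat; apply/orP; left.
by apply/mapP; exists d; rewrite // mem_filter dd is_double_mem.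
Qed.

Lemma dep_arcs_cup n k ityp T (c : int * int) : c \in ext_cups n k ityp T ->
  (c.1 - 1, c.2, c.1 <= 0) \in dep_arcs n k ityp T.
Proof. by move=> cs_c; rewrite mem_cat; apply/orP; right; apply/mapP; exists c. Qed.

Lemma dep_arcsP n k ityp T (B : Defs.arc) : B \in dep_arcs n k ityp T ->
  (exists e, B = (e - 2, e, false)) \/
  exists2 c : int * int, c \in ext_cups n k ityp T & B = (c.1 - 1, c.2, c.1 <= 0).
Proof.
rewrite mem_cat => /orP [/mapP [d _ ->]|/mapP [c cs_c ->]]; first by left; exists (Posz d).
by right; exists c.
Qed.

Theorem proposition6p9 (n k : nat) (ityp : seq nat) (T : tableau) :
  (2 * k <= n)%N -> is_type n ityp -> is_standard n k ityp T ->
  let A := dep_arcs n k ityp T in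
  (* (a) *)
  (forall B, B \in A -> ~~ arc_green B -> (2 < arc_t B - arc_s B)%R ->
     exists l, black_arc_seq A (arc_s B + 1)%R (arc_t B - 1)%R l) /\
  (* (b) *)
  (forall B, B \in A -> arc_green B -> (2 < arc_t B - arc_s B)%R ->
     let G := [seq B' <- A | arc_green B' && (B' != B) && nested B' B] in
     (G = [::] -> exists l, black_arc_seq A 0%R (arc_t B - 1)%R l) /\
     (forall B', B' \in G -> (forall B'', B'' \in G -> (arc_t B'' <= arc_t B')%R) ->
        exists l, black_arc_seq A (arc_t B') (arc_t B - 1)%R l)).
Proof.
move=> _ ityp_type _ A.
have DG : dependence_graph (ext_pos n k) (ext_sym ityp T) (is_doublez ityp)
    (ext_cups n k ityp T) A.
  split.
  - exact: cups_diagram _ (ext_pos_sorted n k).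
  - exact: ext_pos_interval.
  - exact: ext_sym_nonpos.
  - exact: ext_sym_crossP.
  - exact: ext_sym_double.
  - by move=> e; apply: is_doublez_nonadjacent ityp_type.
  - exact: dep_arcs_double.
  - exact: dep_arcs_cup.
  - exact: dep_arcsP.
split=> [|B BA Bg Bb]; first exact: black_arc_interior_seq DG.
split=> [|B']; first exact (green_arc_seq_from_zero DG BA Bg Bb).
exact (green_arc_seq_from_last_nested DG BA Bg).
Qed.
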